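(* Let $n=2^t$, let $L$ be a Latin cube of order $n$ that is isomorphic to the Boolean Latin cube of order $n$, and let $A$ be an $(m,m,m,m)$-cube of order $n$. Let $\alpha,\gamma,\kappa,\theta,\epsilon$ be constants with $\epsilon n\geq 3$ and $$\alpha n-21\kappa n -7\epsilon n-\frac{84\kappa}{\epsilon}n-\frac{21\theta}{\epsilon} n-\frac{80\kappa}{\theta} n-28>0.$$ Suppose that: (a) no row of $L$ contains more than $\kappa n$ conflicts with $A$; (b) no column of $L$ contains more than $\kappa n$ conflicts with $A$; (c) no file of $L$ contains more than $\kappa n$ conflicts with $A$; (d) no symbol-set of $L$ contains more than $\kappa n$ conflicts with $A$; (e) no transversal-set of $L$ contains more than $\kappa n$ conflicts with $A$; (f) each cell of $L$ belongs to at least $\alpha n$ allowed $3$-cubes. Then there is a set of pairwise disjoint allowed $3$-cubes of $L$ such that each conflict of $L$ with $A$ belongs to one of them; consequently, swapping on all these $3$-cubes yields a Latin cube $L'$ that avoids $A$.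
   Context: Cells of a cube of order $n$ are triples $(i,j,k)\in[n]^3$. A row is $\{(i,j^*,k):j^*\in[n]\}$, a column $\{(i^*,j,k):i^*\in[n]\}$, a file $\{(i,j,k^* ):k^*\in[n]\}$. Row layer $i$ is $\{(i,j^*,k^* )\}$, column layer $j$ is $\{(i^*,j,k^* )\}$, file layer $k$ is $\{(i^*,j^*,k)\}$. An $(m,m,m,m)$-cube of order $n$ is a cube $A$ with $A(i,j,k)\subseteq[n]$ for each cell, each cell containing at most $m$ symbols and each symbol occurring at most $m$ times in each row, each column and each file. A Latin cube $L$ of order $n$ has one symbol $L(i,j,k)\in[n]$ in each cell with each symbol exactly once in every row, column and file. Let $a_x$ be the $x$-th smallest element of $\mathbb{Z}_2^t$, $x=1,\dots,2^t$. The Boolean Latin cube $B$ of order $n=2^t$ has $B(i,j,k)=x$ where $a_x=a_i+a_j+a_k$ in $\mathbb{Z}_2^t$. $L$ is isomorphic to $B$ if $L$ is obtained from $B$ by permuting row layers, column layers, file layers and/or symbols. A conflict of $L$ with $A$ is a cell with $L(i,j,k)\in A(i,j,k)$; $L'$ avoids $A$ if it has no conflicts with $A$. A symbol-set of $L$ is the set of all cells in a given row layer, column layer or file layer of $L$ that contain a given symbol. A $3$-cube in $L$ is a set of eight cells $\{(i_a,j_b,k_c): a,b,c\in\{1,2\}\}$ with $i_1\ne i_2$, $j_1\neq j_2$, $k_1\ne k_2$, such that $L(i_1,j_1,k_1)=L(i_2,j_2,k_1)=L(i_1,j_2,k_2)=L(i_2,j_1,k_2)=x_1$ and $L(i_1,j_2,k_1)=L(i_2,j_1,k_1)=L(i_1,j_1,k_2)=L(i_2,j_2,k_2)=x_2$.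 A swap on this $3$-cube interchanges $x_1$ and $x_2$ in these eight cells (all other cells unchanged), producing another Latin cube. A $3$-cube is allowed if after swapping on it none of its eight cells is a conflict. A transversal-set of $L$ is a set of $n$ cells no two in the same row, column or file, no two containing the same symbol, and such that any two of its cells lie in a unique common $3$-cube. Following the paper's convention, floors/ceilings are omitted where not crucial. *)

From HB Require Import structures.
From mathcomp Require Import all_boot all_order all_algebra.
From mathcomp Require Import fingroup perm.
From mathcomp Require Export reals.
Set Implicit Arguments. Unset Strict Implicit. Unset Printing Implicit Defensive.

Definition cell (n : nat) := ('I_n * 'I_n * 'I_n)%type.
Definition ci {n} (c : cell n) : 'I_n := c.1.1.
Definition cj {n} (c : cell n) : 'I_n := c.1.2.
Definition ck {n} (c : cell n) : 'I_n := c.2.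

Definition latin_fun n := 'I_n -> 'I_n -> 'I_n -> 'I_n.
Definition set_cube n := 'I_n -> 'I_n -> 'I_n -> {set 'I_n}.

Definition Lat {n} (L : latin_fun n) (c : cell n) : 'I_n := L (ci c) (cj c) (ck c).
Definition Aat {n} (A : set_cube n) (c : cell n) : {set 'I_n} := A (ci c) (cj c) (ck c).

Definition row_set {n} (i k : 'I_n) : {set cell n} := [set c | (ci c == i) && (ck c == k)].
Definition col_set {n} (j k : 'I_n) : {set cell n} := [set c | (cj c == j) && (ck c == k)].
Definition file_set {n} (i j : 'I_n) : {set cell n} := [set c | (ci c == i) && (cj c == j)].
Definition row_layer {n} (i : 'I_n) : {set cell n} := [set c | ci c == i].
Definition col_layer {n} (j : 'I_n) : {set cell n} := [set c | cj c == j].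
Definition file_layer {n} (k : 'I_n) : {set cell n} := [set c | ck c == k].

Definition is_latin {n} (L : latin_fun n) : Prop :=
  (forall (x i k : 'I_n), #|[set c in row_set i k | Lat L c == x]| = 1) /\
  (forall (x j k : 'I_n), #|[set c in col_set j k | Lat L c == x]| = 1) /\
  (forall (x i j : 'I_n), #|[set c in file_set i j | Lat L c == x]| = 1).

Definition mmmm_cube {n} (m : nat) (A : set_cube n) : Prop :=
  (forall c : cell n, #|Aat A c| <= m) /\
  (forall (x i k : 'I_n), #|[set c in row_set i k | x \in Aat A c]| <= m) /\
  (forall (x j k : 'I_n), #|[set c in col_set j k | x \in Aat A c]| <= m) /\
  (forall (x i j : 'I_n), #|[set c in file_set i j | x \in Aat A c]| <= m).

(* a_x : binary digit vector of x (elements of Z_2^t ordered as integers). *)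
Definition bits t (x : 'I_(2 ^ t)) : {ffun 'I_t -> bool} :=
  [ffun b : 'I_t => odd (x %/ 2 ^ b)].

Definition boolean_cube t : latin_fun (2 ^ t) := fun i j k =>
  odflt i [pick x : 'I_(2 ^ t) |
             bits x == [ffun b => bits i b (+) bits j b (+) bits k b]].

Definition iso_boolean t (L : latin_fun (2 ^ t)) : Prop :=
  exists (p1 p2 p3 s : {perm 'I_(2 ^ t)}),
    forall i j k, L (p1 i) (p2 j) (p3 k) = s (@boolean_cube t i j k).

Definition conflicts {n} (L : latin_fun n) (A : set_cube n) : {set cell n} :=
  [set c | Lat L c \in Aat A c].

Definition avoids {n} (L : latin_fun n) (A : set_cube n) : Prop :=
  conflicts L A = set0.

Definition cube_cells {n} (i1 i2 j1 j2 k1 k2 : 'I_n) : {set cell n} :=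
  [set c | ((ci c == i1) || (ci c == i2)) && ((cj c == j1) || (cj c == j2))
           && ((ck c == k1) || (ck c == k2))].

Definition is_3cube {n} (L : latin_fun n) (Q : {set cell n}) : bool :=
  [exists i1 : 'I_n, exists i2 : 'I_n, exists j1 : 'I_n, exists j2 : 'I_n,
   exists k1 : 'I_n, exists k2 : 'I_n,
   [&& i1 != i2, j1 != j2, k1 != k2,
     Q == cube_cells i1 i2 j1 j2 k1 k2,
     L i2 j2 k1 == L i1 j1 k1, L i1 j2 k2 == L i1 j1 k1, L i2 j1 k2 == L i1 j1 k1,
     L i2 j1 k1 == L i1 j2 k1, L i1 j1 k2 == L i1 j2 k1 &
     L i2 j2 k2 == L i1 j2 k1]].

Definition swap_val {n} (L : latin_fun n) (Q : {set cell n}) (c : cell n) : 'I_n :=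
  if c \in Q then odflt (Lat L c) [pick y in [set Lat L d | d in Q] :\ Lat L c]
  else Lat L c.

Definition allowed {n} (L : latin_fun n) (A : set_cube n) (Q : {set cell n}) : bool :=
  is_3cube L Q && [forall c in Q, swap_val L Q c \notin Aat A c].

Definition is_transversal_set {n} (L : latin_fun n) (T : {set cell n}) : Prop :=
  #|T| = n /\
  (forall c d, c \in T -> d \in T -> c != d ->
     [/\ ~~ ((ci c == ci d) && (ck c == ck d)),
         ~~ ((cj c == cj d) && (ck c == ck d)),
         ~~ ((ci c == ci d) && (cj c == cj d)) &
         Lat L c != Lat L d]) /\
  (forall c d, c \in T -> d \in T -> c != d ->
     #|[set Q : {set cell n} | is_3cube L Q && (c \in Q) && (d \in Q)]| = 1).

Definition swap_all {n} (L : latin_fun n) (F : {set {set cell n}}) : latin_fun n :=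
  fun i j k =>
    let c : cell n := (i, j, k) in
    match [pick Q in F | c \in Q] with
    | Some Q => swap_val L Q c
    | None => Lat L c
    end.

(* Undoing the permutations, L becomes the Boolean cube on X = (Z_2^t)^3: the cell x holds
   x1 + x2 + x3, the 3-cubes are the sets cube c v = {c + r v | r in {0,1}^3} with v <> 0, and
   rows, columns, files, symbol-sets and (diagonal) transversal-sets are the lines
   x + {tau w | w} in the seven directions tau <> 0, so every line holds at most kappa n
   conflicts, hence every plane {y | l . y = u} at most n kappa n and X at most n^2 kappa n.
   The 3-cubes are chosen greedily, one through each uncovered conflict c, keeping the covered
   set sparse on every line and every plane.  The scale v of the new cube is blocked only if
   cube c v meets the covered set, or meets a dense plane or line not through c; counting
   these three kinds of v (at most 7 (eps n + 2 + 2 kappa n), 56 kappa n / theta and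
   21 theta n / eps + 84 kappa n / eps + 28) against the alpha n allowed ones shows that some
   v is free.  After swapping, the symbol at y is the old symbol at y + r v_y, where v_y is
   the scale of the chosen cube containing y (0 if there is none) and r is any direction of
   odd weight; y |-> y + r v_y is an involution fixing the row, the column or the file of y
   for r = (0,1,0), (1,0,0) or (0,0,1), so the swapped cube is still Latin. *)

From mathcomp Require Import all_boot all_order all_algebra.
From mathcomp Require Import fingroup perm.
From mathcomp Require Import reals.
From mathcomp Require Import lra ring.
Import Order.TTheory GRing.Theory Num.Theory.
Set Implicit Arguments. Unset Strict Implicit. Unset Printing Implicit Defensive.

Ltac bool_cases :=
  repeat match goal with |- context [fun_of_fin ?f ?i] => case: (fun_of_fin f i) end.
Ltac vec_eq := apply/ffunP => ?; rewrite !ffunE; bool_cases.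

Lemma nat_eq_from_digits t x y : x < 2 ^ t -> y < 2 ^ t ->
  (forall b, b < t -> odd (x %/ 2 ^ b) = odd (y %/ 2 ^ b)) -> x = y.
Proof.
elim: t x y => [|t IH] x y.
  by rewrite expn0 !ltnS !leqn0 => /eqP -> /eqP ->.
move=> hx hy hb.
have half_lt z : z < 2 ^ t.+1 -> z %/ 2 < 2 ^ t.
  by move=> hz; rewrite ltn_divLR // -expnSr.
have e : x %/ 2 = y %/ 2.
  apply: IH; [exact: half_lt|exact: half_lt|] => b hbt.
  by rewrite -!divnMA -expnS; apply: hb.
have o : odd x = odd y by have := hb 0 (ltn0Sn _); rewrite expn0 !divn1.
by rewrite -[x]odd_double_half -[y]odd_double_half -!divn2 e o.
Qed.

Local Open Scope ring_scope.

Section ExponentTwo.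
Variables (G : zmodType) (addgg : forall x : G, x + x = 0).

Lemma addKg (x y : G) : x + (x + y) = y.
Proof. by rewrite addrA addgg add0r. Qed.

Lemma addgK (x y : G) : y + x + x = y.
Proof. by rewrite -addrA addgg addr0. Qed.

Lemma addgKl (x y z : G) : (x + y) + (x + z) = y + z.
Proof. by rewrite addrACA addgg add0r. Qed.

Lemma addg_eq0 (x y : G) : (x + y == 0) = (x == y).
Proof.
apply/eqP/eqP => [e|->]; last exact: addgg.
by rewrite -(addKg x y) e addr0.
Qed.

Lemma addg_swap (a b c d : G) : a + b = c + d -> a + c = b + d.
Proof. by move=> e; apply/eqP; rewrite -addg_eq0 addrACA e addgg. Qed.

End ExponentTwo.

Section BinaryVectors.
Variable t : nat.
Local Notation V := {ffun 'I_t -> bool}.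

Lemma vec_addxx (v : V) : v + v = 0.
Proof. by vec_eq. Qed.

Lemma card_vec : #|V| = (2 ^ t)%N.
Proof. by rewrite card_ffun card_bool card_ord. Qed.

Lemma bits_inj : injective (@bits t).
Proof.
move=> x y /ffunP e; apply: val_inj; apply: (@nat_eq_from_digits t); rewrite ?ltn_ord // => b hb.
by have := e (Ordinal hb); rewrite !ffunE.
Qed.

Definition unbits (u : V) : 'I_(2 ^ t) :=
  iinv (inj_card_onto bits_inj (eq_leq (etrans card_vec (esym (card_ord _)))) u).

Lemma unbitsK : cancel unbits (@bits t).
Proof. by move=> u; rewrite /unbits f_iinv. Qed.

Lemma bitsK : cancel (@bits t) unbits.
Proof. by move=> x; apply: bits_inj; rewrite unbitsK. Qed.

Lemma unbits_inj : injective unbits.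
Proof. exact: can_inj unbitsK. Qed.

Lemma bits_boolean_cube i j k : bits (@boolean_cube t i j k) = bits i + bits j + bits k.
Proof.
have sum_bits : bits i + bits j + bits k = [ffun b => bits i b (+) bits j b (+) bits k b].
  by apply/ffunP => b; rewrite !ffunE.
rewrite /boolean_cube; case: pickP => [x /eqP -> | none] /=; first by rewrite sum_bits.
by have := none (unbits (bits i + bits j + bits k)); rewrite unbitsK sum_bits eqxx.
Qed.

End BinaryVectors.

Definition dir := (bool * bool * bool)%type.
Definition dir1 : dir := (true, true, true).
Definition dot (l r : dir) : bool := (l.1.1 && r.1.1) (+) (l.1.2 && r.1.2) (+) (l.2 && r.2).

Definition dirs : seq dir :=
  [:: (true, true, true); (true, true, false); (true, false, true); (true, false, false);
      (false, true, true); (false, true, false); (false, false, true); (false, false, false)].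

Lemma perm_enum_dir : perm_eq (enum {: dir}) dirs.
Proof.
apply: uniq_perm; rewrite ?enum_uniq //.
by case=> [[[] []] []]; rewrite mem_enum.
Qed.

Lemma card_dir (P : pred dir) : #|P| = count P dirs.
Proof. by rewrite cardE /enum_mem size_filter -enumT; apply/seq.permP/perm_enum_dir. Qed.

Lemma sum_dir (F : dir -> nat) : (\sum_(r : dir) F r)%N = (\sum_(r <- dirs) F r)%N.
Proof. by rewrite -(perm_big _ perm_enum_dir) big_enum. Qed.

Lemma dirDE (a b : dir) : a + b = (a.1.1 (+) b.1.1, a.1.2 (+) b.1.2, a.2 (+) b.2).
Proof. by []. Qed.

Lemma dir_addxx (r : dir) : r + r = 0.
Proof. by case: r => [[[] []] []]. Qed.

Ltac dir_cases :=
  repeat match goal with r : dir |- _ => move: r; case=> [[[] []] []] end.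

Definition dir_code (r : dir) : nat := 4 * r.1.1 + 2 * r.1.2 + r.2.

(* One direction out of each pair {s, s + tau} other than {0, tau}: the lines in direction
   tau that meet cube c v outside c are the lines through c + s v, s in [coset_reps tau],
   three for each of the seven tau. *)
Definition coset_reps (tau : dir) : {set dir} :=
  [set s : dir | [&& s != 0, s != tau & (dir_code s < dir_code (s + tau)%R)%N]].

Definition cross (a b : dir) : dir :=
  ((a.1.2 && b.2) (+) (a.2 && b.1.2), (a.2 && b.1.1) (+) (a.1.1 && b.2),
   (a.1.1 && b.1.2) (+) (a.1.2 && b.1.1)).

Lemma dot_cross_l (a b : dir) : dot (cross a b) a = false.
Proof. by dir_cases. Qed.

Lemma dot_cross_r (a b : dir) : dot (cross a b) b = false.
Proof. by dir_cases. Qed.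

Lemma cross_neq0 (s tau : dir) : tau != 0 -> s \in coset_reps tau -> cross s tau != 0.
Proof. by rewrite inE; dir_cases. Qed.

Lemma coset_repsP (tau r : dir) : tau != 0 -> r != 0 -> r != tau ->
  (r \in coset_reps tau) || (r + tau \in coset_reps tau).
Proof. by rewrite !inE; dir_cases. Qed.

Definition nonzero_dirs : {set dir} := [set tau : dir | tau != 0].

Lemma card_nonzero_dirs : #|nonzero_dirs| = 7%N.
Proof. by rewrite cardsE card_dir. Qed.

Lemma sum_card_coset_reps : (\sum_(tau in nonzero_dirs) #|coset_reps tau|)%N = 21%N.
Proof.
by rewrite big_mkcond sum_dir !big_cons big_nil !inE /= !cardsE !card_dir.
Qed.

Section Geometry.
Variable t : nat.
Local Notation V := {ffun 'I_t -> bool}.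
Local Notation X := (V * V * V)%type.

Definition dscale (r : dir) (v : V) : X :=
  (if r.1.1 then v else 0, if r.1.2 then v else 0, if r.2 then v else 0).
Definition lform (l : dir) (y : X) : V :=
  (if l.1.1 then y.1.1 else 0) + (if l.1.2 then y.1.2 else 0) + (if l.2 then y.2 else 0).

Definition line (x : X) (tau : dir) : {set X} := [set x + dscale tau w | w : V].
Definition cube (c : X) (v : V) : {set X} := [set c + dscale r v | r : dir].
Definition plane (l : dir) (u : V) : {set X} := [set y | lform l y == u].

Ltac cube_eq :=
  repeat match goal with x : X |- _ => move: x; case=> [[? ?] ?] end;
  dir_cases; rewrite ?dirDE /dscale /lform /=; (try congr (_, _, _)); simpl; vec_eq.

Lemma pointDE (x y : X) : x + y = (x.1.1 + y.1.1, x.1.2 + y.1.2, x.2 + y.2).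
Proof. by []. Qed.

Lemma point_addxx (x : X) : x + x = 0.
Proof. by cube_eq. Qed.

Lemma dscale0 v : dscale 0 v = 0.
Proof. by []. Qed.

Lemma dscalev0 (r : dir) : dscale r 0 = 0.
Proof. by dir_cases. Qed.

Lemma dscaleDl (r r' : dir) v : dscale (r + r') v = dscale r v + dscale r' v.
Proof. by cube_eq. Qed.
Lemma dscaleDr (r : dir) v w : dscale r (v + w) = dscale r v + dscale r w.
Proof. by cube_eq. Qed.
Lemma lformD (l : dir) x y : lform l (x + y) = lform l x + lform l y.
Proof. by cube_eq. Qed.
Lemma lform_dscale (l r : dir) v : lform l (dscale r v) = if dot l r then v else 0.
Proof. by cube_eq. Qed.

Lemma dscale_eq (a tau : dir) v w : v != 0 -> tau != 0 -> dscale a v = dscale tau w ->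
  (a == 0) && (w == 0) || (a == tau) && (w == v).
Proof.
by dir_cases => //= hv _ [] *; subst; rewrite ?eqxx //=; move: hv; rewrite ?eqxx.
Qed.

Lemma cube_self c v : c \in cube c v.
Proof. by apply/imsetP; exists 0; rewrite // dscale0 addr0. Qed.

Lemma line_self x tau : x \in line x tau.
Proof. by apply/imsetP; exists 0; rewrite // dscalev0 addr0. Qed.

Lemma cube_shift c v y : y \in cube c v -> cube y v = cube c v.
Proof.
case/imsetP => r _ ->; apply/setP => z.
apply/imsetP/imsetP => -[r' _ ->]; exists (r + r') => //; rewrite dscaleDl addrA //.
by rewrite (addgK point_addxx).
Qed.

Lemma line_shift x tau y : y \in line x tau -> line y tau = line x tau.
Proof.
case/imsetP => w _ ->; apply/setP => z.
apply/imsetP/imsetP => -[w' _ ->]; exists (w + w') => //; rewrite dscaleDr addrA //.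
by rewrite (addgK point_addxx).
Qed.

Lemma card_cube c v : (#|cube c v| <= 8)%N.
Proof. by apply: leq_trans (leq_imset_card _ _) _; rewrite card_dir. Qed.

Lemma card_cubeI_le c v (Y : {set X}) :
  (#|cube c v :&: Y| <= #|[set r | (c + dscale r v)%R \in Y]|)%N.
Proof.
apply: leq_trans (leq_imset_card (fun r => c + dscale r v) _); apply: subset_leq_card.
by apply/subsetP => y /setIP [/imsetP [r _ ->] hY]; apply: imset_f; rewrite inE.
Qed.

Lemma card_cubeI_line c v x tau : v != 0 -> tau != 0 -> (#|cube c v :&: line x tau| <= 2)%N.
Proof.
move=> hv htau; apply: leq_trans (card_cubeI_le c v _) _.
case: (set_0Vmem [set r | c + dscale r v \in line x tau]) => [-> | [r0]]; first by rewrite cards0.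
rewrite inE => /imsetP [w0 _ e0].
have sub : [set r | c + dscale r v \in line x tau] \subset [set r0; tau + r0].
  apply/subsetP => r; rewrite !inE => /imsetP [w _ e].
  have : dscale (r + r0) v = dscale tau (w + w0).
    by rewrite dscaleDl dscaleDr -(addgKl point_addxx c) e e0 (addgKl point_addxx).
  case/(dscale_eq hv htau)/orP => /andP [/eqP h _].
    by rewrite -(addg_eq0 dir_addxx) h eqxx.
  by rewrite -h (addgK dir_addxx) eqxx orbT.
by apply: leq_trans (subset_leq_card sub) _; rewrite cards2 ltnS leq_b1.
Qed.

Lemma card_dot_eq (l : dir) b : l != 0 -> (#|[set r | dot l r == b]| <= 4)%N.
Proof. by dir_cases; case: b; rewrite cardsE card_dir. Qed.

Lemma card_cubeI_plane c v l u : v != 0 -> l != 0 -> (#|cube c v :&: plane l u| <= 4)%N.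
Proof.
move=> hv hl; apply: leq_trans (card_cubeI_le c v _) _.
case: (set_0Vmem [set r | c + dscale r v \in plane l u]) => [-> | [r0]]; first by rewrite cards0.
rewrite !inE => /eqP e0.
have sub : [set r | c + dscale r v \in plane l u] \subset [set r | dot l r == dot l r0].
  apply/subsetP => r; rewrite !inE => /eqP e.
  move: e; rewrite -e0 !lformD !lform_dscale => /addrI.
  by case: (dot l r); case: (dot l r0) => // e; rewrite e eqxx in hv.
by apply: leq_trans (subset_leq_card sub) (card_dot_eq _ hl).
Qed.

Definition lead (tau : dir) (z : X) : V :=
  if tau.1.1 then z.1.1 else if tau.1.2 then z.1.2 else z.2.

Lemma lead_dscale tau w : tau != 0 -> lead tau (dscale tau w) = w.
Proof. by case: tau => [[[] []] []]. Qed.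

Lemma dscale_inj tau : tau != 0 -> injective (dscale tau).
Proof. by move=> htau w w' e; rewrite -(lead_dscale w htau) e lead_dscale. Qed.

Lemma card_line_preim c tau (Y : {set X}) : tau != 0 ->
  #|[set w | (c + dscale tau w)%R \in Y]| = #|Y :&: line c tau|.
Proof.
move=> htau; have inj : injective (fun w => c + dscale tau w).
  by move=> w w' /addrI /(dscale_inj htau).
rewrite -(card_imset _ inj); apply: eq_card => y; rewrite inE.
apply/imsetP/andP => [[w hw ->] | [hy /imsetP [w _ ey]]]; last by exists w; rewrite // inE -ey.
by split; [move: hw; rewrite inE | apply: imset_f].
Qed.

(* For l <> 0, the plane [plane l u] is the disjoint union of the lines in direction
   [plane_dir l], one for each value of the coordinate [plane_coord l]. *)
Definition plane_dir (l : dir) : dir :=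
  match l with
  | (true, false, false) | (false, false, true) => (false, true, false)
  | (false, true, false) => (false, false, true)
  | (true, false, true) => (true, false, true)
  | (false, true, true) => (false, true, true)
  | _ => (true, true, false)
  end.

Lemma plane_dir_neq0 (l : dir) : plane_dir l != 0.
Proof. by dir_cases. Qed.

Definition plane_coord (l : dir) (z : X) : V :=
  match l with
  | (true, false, false) | (true, true, false) | (true, true, true) => z.2
  | (true, false, true) => z.1.2
  | _ => z.1.1
  end.

Lemma plane_line_fiber l y y' : l != 0 -> lform l y = lform l y' ->
  plane_coord l y = plane_coord l y' -> y' \in line y (plane_dir l).
Proof.
move=> hl hform hcoord; apply/imsetP; exists (lead (plane_dir l) (y + y')) => //.
move: hl hform hcoord; case: y y' => [[a1 a2] a3] [[b1 b2] b3].
case: l => [[[] []] []] //= _; rewrite /lform /= => /ffunP h e; subst;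
  by rewrite /dscale /=; congr (_, _, _); apply/ffunP => i; move: (h i); rewrite !ffunE; bool_cases.
Qed.

Lemma lform_cube l c v y : y \in cube c v -> lform l y != lform l c -> lform l y = lform l c + v.
Proof.
by case/imsetP => r _ ->; rewrite lformD lform_dscale; case: (dot l r); rewrite ?addr0 ?eqxx.
Qed.

Lemma line_meets_cube c v x tau y : v != 0 -> tau != 0 -> y \in cube c v -> y \in line x tau ->
  c \notin line x tau -> exists2 s, s \in coset_reps tau & line x tau = line (c + dscale s v) tau.
Proof.
move=> hv htau /imsetP [r _ ->] hl hc; rewrite -(line_shift hl).
have r0 : r != 0 by apply: contra hc => /eqP r0; rewrite -(line_shift hl) r0 addr0 line_self.
have rtau : r != tau.
  apply: contra hc => /eqP rtau; rewrite -(line_shift hl) rtau; apply/imsetP.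
  by exists v; rewrite // (addgK point_addxx).
case/orP: (coset_repsP htau r0 rtau) => hs; first by exists r.
exists (r + tau) => //; apply: line_shift; apply/imsetP.
by exists v; rewrite // dscaleDl addrA (addgK point_addxx).
Qed.

Lemma coset_rep_lines_disj c s tau v v' y : tau != 0 -> s \in coset_reps tau ->
  y \in line (c + dscale s v) tau -> y \in line (c + dscale s v') tau -> v = v'.
Proof.
move=> htau; rewrite inE => /and3P [s0 stau _] /imsetP [w _ ->] /imsetP [w' _].
rewrite -!addrA => /addrI /(addg_swap point_addxx); rewrite -!dscaleDr => e.
apply/eqP; rewrite -(addg_eq0 (@vec_addxx t)); apply/negPn/negP => hv.
have := dscale_eq hv htau e.
by rewrite (negbTE s0) (negbTE stau).
Qed.

Lemma line_sub_plane c s tau v :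
  line (c + dscale s v) tau \subset plane (cross s tau) (lform (cross s tau) c).
Proof.
apply/subsetP => y /imsetP [w _ ->].
by rewrite inE !lformD !lform_dscale dot_cross_l dot_cross_r !addr0.
Qed.

End Geometry.

Section Counting.
Variables (T U : finType) (R : numDomainType).

Lemma card_fibers (A : {set T}) (f : T -> U) :
  #|A| = (\sum_u #|A :&: [set y | f y == u]|)%N.
Proof.
rewrite -sum1_card (partition_big f xpredT) //=; apply: eq_bigr => u _.
by rewrite -sum1_card; apply: eq_bigl => y; rewrite !inE.
Qed.

Lemma card_bigcup_leq (P : pred U) (F : U -> {set T}) :
  (#|\bigcup_(u | P u) F u| <= \sum_(u | P u) #|F u|)%N.
Proof.
elim/big_ind2: _ => [|m A m' B hA hB|u _]; rewrite ?cards0 //.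
by apply: leq_trans (leq_card_setU A B).1 _; apply: leq_add.
Qed.

Lemma card_heavy_parts (A : {set T}) (f : T -> U) (B : U -> {set T}) (F : {set U}) (M : R) :
  (forall u, B u \subset A :&: [set y | f y == u]) ->
  (forall u, u \in F -> M <= #|B u|%:R) -> #|F|%:R * M <= #|A|%:R.
Proof.
move=> hB hM; have sum_le : (\sum_(u in F) #|B u| <= #|A|)%N.
  rewrite (card_fibers A f) [X in (_ <= X)%N](bigID (mem F)) /=.
  by apply: leq_trans (leq_addr _ _); apply: leq_sum => u _; apply: subset_leq_card.
apply: le_trans (_ : (\sum_(u in F) #|B u|)%:R <= _); last by rewrite ler_nat.
by rewrite natr_sum mulr_natl -sumr_const; apply: ler_sum.
Qed.

End Counting.

Section HeavySets.
Variables (t : nat) (R : numDomainType).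
Local Notation V := {ffun 'I_t -> bool}.
Local Notation X := (V * V * V)%type.
Local Notation n := ((2 ^ t)%:R : R).

Section ConflictBounds.
Variables (conf : {set X}) (kappa : R).
Hypothesis conf_line : forall x tau, tau != 0 -> #|conf :&: line x tau|%:R <= kappa * n.

Lemma card_conf_plane l u : l != 0 -> #|conf :&: plane l u|%:R <= n * (kappa * n).
Proof.
move=> hl; rewrite (card_fibers _ (plane_coord l)) natr_sum.
have -> : n * (kappa * n) = \sum_(a : V) kappa * n by rewrite sumr_const card_vec mulr_natl.
apply: ler_sum => a _.
have [-> | [y0]] := set_0Vmem (conf :&: plane l u :&: [set y | plane_coord l y == a]).
  by rewrite cards0; apply: le_trans (conf_line 0 (plane_dir_neq0 l)).
rewrite !inE => /andP [/andP [_ /eqP form0] /eqP coord0].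
apply: le_trans (conf_line y0 (plane_dir_neq0 l)); rewrite ler_nat; apply: subset_leq_card.
apply/subsetP => y; rewrite !inE => /andP [/andP [-> /eqP formy] /eqP coordy] /=.
by apply: plane_line_fiber; rewrite // ?formy ?form0 ?coordy ?coord0.
Qed.

Lemma card_conf : #|conf|%:R <= n * (n * (kappa * n)).
Proof.
rewrite (card_fibers _ (lform (true, false, false))) natr_sum.
have -> : n * (n * (kappa * n)) = \sum_(u : V) n * (kappa * n).
  by rewrite sumr_const card_vec mulr_natl.
by apply: ler_sum => u _; apply: card_conf_plane.
Qed.

End ConflictBounds.

Definition meeting_cubes (S : {set X}) (c : X) : {set V} :=
  [set v | ~~ [disjoint cube c v & S]].

Lemma card_meeting_cubes (S : {set X}) c : c \notin S ->
  (#|meeting_cubes S c| <= \sum_(tau in nonzero_dirs) #|S :&: line c tau|)%N.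
Proof.
move=> cS.
have sub : meeting_cubes S c \subset \bigcup_(tau in nonzero_dirs) [set w | c + dscale tau w \in S].
  apply/subsetP => v; rewrite inE -setI_eq0 => /set0Pn [y /setIP [hy yS]].
  case/imsetP: hy yS => r _ ->; have [-> | r0] := eqVneq r 0.
    by rewrite dscale0 addr0 (negbTE cS).
  by move=> hS; apply/bigcupP; exists r; rewrite !inE.
apply: leq_trans (subset_leq_card sub) (leq_trans (card_bigcup_leq _ _) (eq_leq _)).
by apply: eq_bigr => tau; rewrite inE => /card_line_preim ->.
Qed.

Lemma card_heavy_planes (S : {set X}) c l (b : R) :
  #|[set v | b <= #|S :&: plane l (lform l c + v)|%:R]|%:R * b <= #|S|%:R.
Proof.
apply: (card_heavy_parts (f := fun y => lform l c + lform l y)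
  (B := fun v => S :&: plane l (lform l c + v))) => [v | v]; last by rewrite inE.
apply/subsetP => y; rewrite !inE => /andP [-> /eqP ->].
by rewrite (addKg (@vec_addxx t)) eqxx.
Qed.

Lemma card_heavy_lines (S : {set X}) c s tau (b : R) : tau != 0 -> s \in coset_reps tau ->
  #|[set v | b <= #|S :&: line (c + dscale s v) tau|%:R]|%:R * b
    <= #|S :&: plane (cross s tau) (lform (cross s tau) c)|%:R.
Proof.
move=> htau hs.
pose which y := odflt 0 [pick v | y \in line (c + dscale s v) tau].
apply: (card_heavy_parts (f := which) (B := fun v => S :&: line (c + dscale s v) tau)) => [v | v];
  last by rewrite inE.
apply/subsetP => y /setIP [yS yl].
rewrite in_setI in_setI yS (subsetP (line_sub_plane c s tau v) _ yl) /= inE /which.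
case: pickP => [v' yl' | none] /=; first by rewrite (coset_rep_lines_disj htau hs yl' yl).
by have := none v; rewrite yl.
Qed.

End HeavySets.

Lemma packing_arith (R : realFieldType) (alpha kappa theta eps n g b2 b3 b4 : R) :
  0 < theta -> 0 < eps -> 0 < n -> 3 <= eps * n ->
  0 < alpha * n - 21 * kappa * n - 7 * eps * n - 84 * kappa / eps * n
      - 21 * theta / eps * n - 80 * kappa / theta * n - 28 ->
  1 <= kappa * n -> alpha * n <= g -> g <= n -> g <= b2 + b3 + b4 ->
  b2 <= 7 * (eps * n + 2 + 2 * (kappa * n)) ->
  b3 * (theta * n ^+ 2) <= 7 * (8 * (n * (n * (kappa * n)))) ->
  b4 * (eps * n) <= 21 * (theta * n ^+ 2 + 4 + 4 * (n * (kappa * n))) -> False.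
Proof.
move=> th0 e0 n0 en main K1 ag gn gb hb2 hb3 hb4.
have th0' := lt0r_neq0 th0; have e0' := lt0r_neq0 e0.
set K := kappa * n in K1 hb2 hb3 hb4; set P := K / theta; set Q := theta * n / eps.
have {}main : 0 < alpha * n - 21 * K - 7 * (eps * n) - 84 * (K / eps) - 21 * Q - 80 * P - 28.
  by move: main; congr (0 < _); rewrite /P /Q /K; field; rewrite th0' e0'.
have b3P : b3 <= 56 * P.
  have thn2 : 0 < theta * n ^+ 2 by rewrite mulr_gt0 ?exprn_gt0.
  rewrite -(ler_pM2r thn2) [X in _ <= X](_ : _ = 7 * (8 * (n * (n * K)))) //.
  by rewrite /P; field.
have b4Q : b4 <= 21 * Q + 84 / (eps * n) + 84 * (K / eps).
  have en0 : 0 < eps * n by rewrite mulr_gt0.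
  rewrite -(ler_pM2r en0) [X in _ <= X](_ : _ = 21 * (theta * n ^+ 2 + 4 + 4 * (n * K))) //.
  by rewrite /Q; field; rewrite e0' lt0r_neq0.
have W28 : 84 / (eps * n) <= 28 by rewrite ler_pdivrMr ?mulr_gt0 //; lra.
have Ke0 : 0 <= K / eps by rewrite divr_ge0 //; lra.
have P0 : 0 <= P by rewrite divr_ge0 //; lra.
have Q0 : 0 <= Q by rewrite divr_ge0 ?mulr_ge0 //; lra.
have Qn : 21 * Q < n by lra.
have En : 7 * eps < 1.
  by rewrite -(ltr_pM2r n0) mul1r -mulrA; lra.
(* The bound is linear in K, P and Q except for P >= 1, which needs theta < 1. *)
have th1 : theta < 1.
  have : theta * n = Q * eps by rewrite /Q; field.
  nra.
have P1 : 1 <= P by rewrite /P ler_pdivlMr // mul1r; lra.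
lra.
Qed.

Section GreedyPacking.
Variables (t : nat) (R : realFieldType).
Local Notation V := {ffun 'I_t -> bool}.
Local Notation X := (V * V * V)%type.
Local Notation n := ((2 ^ t)%:R : R).

Definition covered (C : {set X}) (d : X -> V) : {set X} := \bigcup_(c in C) cube c (d c).

Lemma cube_sub_covered (C : {set X}) d c : c \in C -> cube c (d c) \subset covered C d.
Proof. by move=> hc; apply: (bigcup_sup c). Qed.

Lemma notin_covered (C : {set X}) d c : c \notin covered C d -> c \notin C.
Proof. by apply: contra => cC; apply: (subsetP (cube_sub_covered d cC)); apply: cube_self. Qed.

Lemma card_covered (C : {set X}) d : (#|covered C d| <= 8 * #|C|)%N.
Proof.
apply: leq_trans (card_bigcup_leq _ _) _; rewrite mulnC -sum_nat_const.
by apply: leq_sum => c _; apply: card_cube.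
Qed.

Lemma covered_add (C : {set X}) d c v : c \notin C ->
  covered (c |: C) (fun y => if y == c then v else d y) = cube c v :|: covered C d.
Proof.
move=> cC; rewrite /covered big_setU1 //= eqxx; congr (_ :|: _).
by apply: eq_bigr => y yC; rewrite ifF //; apply: contraNF cC => /eqP <-.
Qed.

Lemma card_setU1I (C Y : {set X}) c : c \notin C ->
  #|(c |: C) :&: Y| = ((c \in Y) + #|C :&: Y|)%N.
Proof.
move=> cC; rewrite setIUl; have [cY | cY] := boolP (c \in Y).
  by rewrite (setIidPl _) ?sub1set // cardsU1 inE (negbTE cC).
rewrite (_ : [set c] :&: Y = set0) ?set0U //; apply/setP => y; rewrite !inE.
by apply/andP => -[/eqP -> ]; rewrite (negbTE cY).
Qed.

Lemma sparse_add (Q S C Y : {set X}) c (b : R) (k : nat) :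
  c \notin C -> 0 <= b -> (#|Q :&: Y| <= k)%N ->
  #|S :&: Y|%:R < b + k%:R + k%:R * #|C :&: Y|%:R ->
  [\/ c \in Y, Q :&: Y = set0 | #|S :&: Y|%:R < b] ->
  #|(Q :|: S) :&: Y|%:R < b + k%:R + k%:R * #|(c |: C) :&: Y|%:R.
Proof.
move=> cC b0 QY SY cases; rewrite card_setU1I // natrD.
have : #|(Q :|: S) :&: Y|%:R <= #|Q :&: Y|%:R + #|S :&: Y|%:R :> R.
  by rewrite -natrD ler_nat setIUl; apply: (leq_card_setU _ _).1.
move: QY; rewrite -(ler_nat R) => QY.
have CY : 0 <= #|C :&: Y|%:R :> R := ler0n _ _.
have k0 : 0 <= k%:R :> R := ler0n _ _.
have cY0 : 0 <= (c \in Y)%:R :> R := ler0n _ _.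
by case: cases => [-> | -> | ]; rewrite ?cards0 /=; nra.
Qed.

Variables (conf : {set X}) (good : X -> V -> bool) (alpha kappa theta eps : R).

(* A new cube meets a line in at most 2 cells and a plane in at most 4; when its base point
   lies on that line or plane, this growth is paid for by the slack 2 (resp. 4) per base point. *)
Definition sparse_packing (C : {set X}) (d : X -> V) : Prop :=
  [/\ C \subset conf,
      forall c, c \in C -> (d c != 0) && good c (d c),
      forall c c', c \in C -> c' \in C -> c != c' -> [disjoint cube c (d c) & cube c' (d c')],
      forall x tau, tau != 0 ->
        #|covered C d :&: line x tau|%:R < eps * n + 2 + 2 * #|C :&: line x tau|%:R &
      forall l u, l != 0 ->
        #|covered C d :&: plane l u|%:R < theta * n ^+ 2 + 4 + 4 * #|C :&: plane l u|%:R].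

Hypotheses (theta_gt0 : 0 < theta) (eps_gt0 : 0 < eps).

Lemma sparse_packing0 : sparse_packing set0 (fun _ => 0).
Proof.
have covered0 : covered set0 (fun _ => 0) = set0 by rewrite /covered big_set0.
have n2 : 0 <= theta * n ^+ 2 := mulr_ge0 (ltW theta_gt0) (sqr_ge0 _).
have n1 : 0 <= eps * n := mulr_ge0 (ltW eps_gt0) (ler0n _ _).
split; rewrite ?covered0 ?sub0set //.
- by move=> c; rewrite inE.
- by move=> c c'; rewrite inE.
- by move=> x tau _; rewrite set0I !cards0; lra.
- by move=> l u _; rewrite set0I !cards0; lra.
Qed.

Lemma sparse_packing_add C d c v : sparse_packing C d -> c \in conf ->
  c \notin covered C d -> v != 0 -> good c v -> [disjoint cube c v & covered C d] ->
  (forall l, l != 0 -> #|covered C d :&: plane l (lform l c + v)|%:R < theta * n ^+ 2) ->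
  (forall tau s, tau != 0 -> s \in coset_reps tau ->
     #|covered C d :&: line (c + dscale s v) tau|%:R < eps * n) ->
  sparse_packing (c |: C) (fun y => if y == c then v else d y).
Proof.
move=> [sub_conf good_C disj_C sparse_lines sparse_planes] c_conf c_unc v0 good_v disj.
move=> light_planes light_lines.
have cC := notin_covered c_unc.
have dC c' : c' \in C -> (if c' == c then v else d c') = d c'.
  by move=> c'C; rewrite ifF //; apply: contraNF cC => /eqP <-.
split; rewrite ?covered_add //.
- by apply/subsetP => y; rewrite in_setU1 => /orP [/eqP -> | /(subsetP sub_conf)].
- move=> y; rewrite in_setU1 => /orP [/eqP -> | yC]; first by rewrite eqxx v0 good_v.
  by rewrite dC ?good_C.
- have disj_c c' : c' \in C -> [disjoint cube c v & cube c' (d c')].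
    by move=> c'C; apply: disjointWr disj; apply: cube_sub_covered.
  move=> c1 c2; rewrite !in_setU1.
  case/orP => [/eqP -> | c1C]; case/orP => [/eqP -> | c2C]; rewrite ?eqxx ?dC //.
  + by move=> _; apply: disj_c.
  + by move=> _; rewrite disjoint_sym; apply: disj_c.
  + by apply: disj_C.
- move=> x tau htau; apply: (sparse_add cC (mulr_ge0 (ltW eps_gt0) (ler0n _ _)));
    [exact: card_cubeI_line | exact: sparse_lines | ].
  have [cl | cl] := boolP (c \in line x tau); first exact: Or31.
  have [-> | ] := eqVneq (cube c v :&: line x tau) set0; first exact: Or32.
  case/set0Pn => y /setIP [yc yl]; apply: Or33.
  by have [s hs ->] := line_meets_cube v0 htau yc yl cl; apply: light_lines.
- move=> l u hl; apply: (sparse_add cC (mulr_ge0 (ltW theta_gt0) (sqr_ge0 _)));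
    [exact: card_cubeI_plane | exact: sparse_planes | ].
  have [cp | cp] := boolP (c \in plane l u); first exact: Or31.
  have [-> | ] := eqVneq (cube c v :&: plane l u) set0; first exact: Or32.
  case/set0Pn => y /setIP [yc]; rewrite inE => /eqP yp; apply: Or33.
  have : lform l y != lform l c by rewrite yp; apply: contra cp; rewrite inE eq_sym.
  by move/(lform_cube yc); rewrite yp => ->; apply: light_planes.
Qed.

Hypothesis conf_line : forall x tau, tau != 0 -> #|conf :&: line x tau|%:R <= kappa * n.

Definition heavy_planes (S : {set X}) c : {set V} :=
  \bigcup_(l in nonzero_dirs) [set v | theta * n ^+ 2 <= #|S :&: plane l (lform l c + v)|%:R].

Definition heavy_lines (S : {set X}) c : {set V} :=
  \bigcup_(tau in nonzero_dirs) \bigcup_(s in coset_reps tau)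
     [set v | eps * n <= #|S :&: line (c + dscale s v) tau|%:R].

Lemma card_meeting_cubes_bound C d c : sparse_packing C d -> c \notin covered C d ->
  #|meeting_cubes (covered C d) c|%:R <= 7 * (eps * n + 2 + 2 * (kappa * n)).
Proof.
move=> [sub_conf _ _ sparse_lines _] cS.
apply: le_trans (_ : (\sum_(tau in nonzero_dirs) #|covered C d :&: line c tau|)%:R <= _).
  by rewrite ler_nat; apply: card_meeting_cubes.
have -> : 7 * (eps * n + 2 + 2 * (kappa * n)) =
          \sum_(tau in nonzero_dirs) (eps * n + 2 + 2 * (kappa * n)).
  by rewrite sumr_const card_nonzero_dirs mulr_natl.
rewrite natr_sum; apply: ler_sum => tau; rewrite inE => htau.
have := sparse_lines c tau htau; have := conf_line c htau.
have : #|C :&: line c tau|%:R <= #|conf :&: line c tau|%:R :> R.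
  by rewrite ler_nat subset_leq_card // setSI.
lra.
Qed.

Lemma card_covered_bound C d : sparse_packing C d ->
  #|covered C d|%:R <= 8 * (n * (n * (kappa * n))).
Proof.
move=> [sub_conf _ _ _ _].
apply: le_trans (_ : (8 * #|C|)%N%:R <= _); first by rewrite ler_nat card_covered.
rewrite natrM; apply: ler_wpM2l => //; apply: le_trans (card_conf conf_line).
by rewrite ler_nat subset_leq_card.
Qed.

Lemma card_heavy_planes_bound C d c : sparse_packing C d ->
  #|heavy_planes (covered C d) c|%:R * (theta * n ^+ 2) <= 7 * (8 * (n * (n * (kappa * n)))).
Proof.
move=> hC; have thn2 : 0 <= theta * n ^+ 2 := mulr_ge0 (ltW theta_gt0) (sqr_ge0 _).
pose F l := [set v | theta * n ^+ 2 <= #|covered C d :&: plane l (lform l c + v)|%:R].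
have card_le : (#|heavy_planes (covered C d) c| <= \sum_(l in nonzero_dirs) #|F l|)%N.
  exact: card_bigcup_leq.
rewrite -(ler_nat R) natr_sum in card_le; apply: le_trans (ler_wpM2r thn2 card_le) _.
have -> : 7 * (8 * (n * (n * (kappa * n)))) =
          \sum_(l in nonzero_dirs) 8 * (n * (n * (kappa * n))).
  by rewrite sumr_const card_nonzero_dirs mulr_natl.
rewrite mulr_suml; apply: ler_sum => l _.
exact: le_trans (card_heavy_planes _ _ _ _) (card_covered_bound hC).
Qed.

Lemma card_heavy_lines_bound C d c : sparse_packing C d ->
  #|heavy_lines (covered C d) c|%:R * (eps * n)
    <= 21 * (theta * n ^+ 2 + 4 + 4 * (n * (kappa * n))).
Proof.
move=> [sub_conf _ _ _ sparse_planes]; set M := theta * n ^+ 2 + 4 + 4 * (n * (kappa * n)).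
have en : 0 <= eps * n := mulr_ge0 (ltW eps_gt0) (ler0n _ _).
pose F tau s := [set v | eps * n <= #|covered C d :&: line (c + dscale s v) tau|%:R].
have card_le : (#|heavy_lines (covered C d) c|
                <= \sum_(tau in nonzero_dirs) \sum_(s in coset_reps tau) #|F tau s|)%N.
  apply: leq_trans (card_bigcup_leq _ _) _; apply: leq_sum => tau _; exact: card_bigcup_leq.
rewrite -(ler_nat R) natr_sum in card_le; apply: le_trans (ler_wpM2r en card_le) _.
have -> : 21 * M = \sum_(tau in nonzero_dirs) M *+ #|coset_reps tau|.
  by rewrite sumrMnr sum_card_coset_reps mulr_natl.
rewrite mulr_suml; apply: ler_sum => tau; rewrite inE => htau.
rewrite natr_sum mulr_suml -sumr_const; apply: ler_sum => s hs.
apply: le_trans (card_heavy_lines _ _ _ htau hs) _.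
set P := plane _ _; have hcross := cross_neq0 htau hs.
have := sparse_planes _ (lform (cross s tau) c) hcross; rewrite -/P.
have := card_conf_plane conf_line (lform (cross s tau) c) hcross; rewrite -/P.
have : #|C :&: P|%:R <= #|conf :&: P|%:R :> R by rewrite ler_nat subset_leq_card // setSI.
rewrite /M; lra.
Qed.

Hypothesis eps_n : 3 <= eps * n.
Hypothesis good_many :
  forall c, c \in conf -> alpha * n <= #|[set v : V | (v != 0) && good c v]|%:R.
Hypothesis alpha_large : 0 < alpha * n - 21 * kappa * n - 7 * eps * n - 84 * kappa / eps * n
  - 21 * theta / eps * n - 80 * kappa / theta * n - 28.

Lemma sparse_packing_extend C d c : sparse_packing C d -> c \in conf -> c \notin covered C d ->
  exists v, sparse_packing (c |: C) (fun y => if y == c then v else d y).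
Proof.
move=> hC c_conf c_unc; set S := covered C d.
pose G := [set v : V | (v != 0) && good c v].
have [G_bad | /subsetPn [v]] :=
  boolP (G \subset meeting_cubes S c :|: heavy_planes S c :|: heavy_lines S c); last first.
  rewrite !inE !negb_or negbK => /andP [v0 good_v] /andP [/andP [disj light_planes] light_lines].
  exists v; apply: sparse_packing_add => // [l hl | tau s htau hs].
    rewrite ltNge; apply: contra light_planes => heavy.
    by apply/bigcupP; exists l; rewrite ?inE.
  rewrite ltNge; apply: contra light_lines => heavy.
  apply/bigcupP; exists tau; first by rewrite inE.
  by apply/bigcupP; exists s; rewrite // inE.
exfalso; apply: (packing_arith theta_gt0 eps_gt0 _ eps_n alpha_large _ (good_many c_conf) _ _
  (card_meeting_cubes_bound hC c_unc) (card_heavy_planes_bound c hC) (card_heavy_lines_bound c hC)).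
- by rewrite ltr0n expn_gt0.
- apply: le_trans (conf_line c (plane_dir_neq0 0)); rewrite (ler_nat R 1).
  by apply/card_gt0P; exists c; rewrite inE c_conf line_self.
- by rewrite -card_vec ler_nat max_card.
- rewrite -!natrD ler_nat; apply: leq_trans (subset_leq_card G_bad) _.
  by apply: leq_trans (leq_card_setU _ _).1 _; rewrite leq_add2r; apply: (leq_card_setU _ _).1.
Qed.

Lemma greedy_packing : exists C d, sparse_packing C d /\ conf \subset covered C d.
Proof.
suff grow k : exists C d, sparse_packing C d /\ ((k <= #|C|)%N \/ conf \subset covered C d).
  have [C [d [hC [big | cover]]]] := grow #|conf|.+1; last by exists C, d.
  by case: hC => sub_conf _ _ _ _; have := subset_leq_card sub_conf; rewrite leqNgt big.
elim: k => [|k [C [d [hC [big | cover]]]]].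
- by exists set0, (fun _ => 0); split; [exact: sparse_packing0 | left].
- have [cover | /subsetPn [c c_conf c_unc]] := boolP (conf \subset covered C d).
    by exists C, d; split => //; right.
  have [v hext] := sparse_packing_extend hC c_conf c_unc.
  exists (c |: C), (fun y => if y == c then v else d y); split => //.
  by left; rewrite cardsU1 (notin_covered c_unc).
- by exists C, d; split => //; right.
Qed.

End GreedyPacking.

Section BooleanCoordinates.
Variables (t : nat) (L : latin_fun (2 ^ t)) (A : set_cube (2 ^ t)) (p1 p2 p3 s : {perm 'I_(2 ^ t)}).
Hypothesis L_boolean : forall i j k, L (p1 i) (p2 j) (p3 k) = s (boolean_cube i j k).
Local Notation V := {ffun 'I_t -> bool}.
Local Notation X := (V * V * V)%type.

Definition cell_of (x : X) : cell (2 ^ t) :=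
  (p1 (unbits x.1.1), p2 (unbits x.1.2), p3 (unbits x.2)).
Definition coords (e : cell (2 ^ t)) : X :=
  (bits ((p1^-1)%g (ci e)), bits ((p2^-1)%g (cj e)), bits ((p3^-1)%g (ck e))).
Definition symbol_of (u : V) : 'I_(2 ^ t) := s (unbits u).

Lemma cell_ofK : cancel cell_of coords.
Proof. by case=> [[a b] c]; rewrite /cell_of /coords /ci /cj /ck /= !permK !unbitsK. Qed.

Lemma coordsK : cancel coords cell_of.
Proof. by case=> [[i j] k]; rewrite /cell_of /coords /ci /cj /ck /= !bitsK !permKV. Qed.

Lemma cell_of_inj : injective cell_of. Proof. exact: can_inj cell_ofK. Qed.

Lemma symbol_of_inj : injective symbol_of.
Proof. by move=> u w /perm_inj /unbits_inj. Qed.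

Lemma L_unbits a b c :
  L (p1 (unbits a)) (p2 (unbits b)) (p3 (unbits c)) = symbol_of (a + b + c).
Proof. by rewrite L_boolean; congr (s _); apply: bits_inj; rewrite bits_boolean_cube !unbitsK. Qed.

Lemma Lat_cell_of x : Lat L (cell_of x) = symbol_of (lform dir1 x).
Proof. by case: x => [[a b] c]; apply: L_unbits. Qed.

Lemma perm_unbits (p : {perm 'I_(2 ^ t)}) i : exists a, i = p (unbits a).
Proof. by exists (bits ((p^-1)%g i)); rewrite bitsK permKV. Qed.

Lemma mem_cube_coord (c y : X) v : (y \in cube c v) =
  [&& (y.1.1 == c.1.1) || (y.1.1 == c.1.1 + v), (y.1.2 == c.1.2) || (y.1.2 == c.1.2 + v) &
      (y.2 == c.2) || (y.2 == c.2 + v)].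
Proof.
apply/imsetP/idP => [[r _ ->] | ].
  case: r => [[[] []] []]; case: c => [[c1 c2] c3];
  by rewrite pointDE /dscale /= ?addr0 !eqxx ?orbT.
case: c y => [[c1 c2] c3] [[y1 y2] y3] /= /and3P [h1 h2 h3].
exists (y1 != c1, y2 != c2, y3 != c3) => //; rewrite pointDE /dscale /=; congr (_, _, _).
- by case: eqP h1 => [-> | _] /=; [rewrite addr0 | move/eqP].
- by case: eqP h2 => [-> | _] /=; [rewrite addr0 | move/eqP].
- by case: eqP h3 => [-> | _] /=; [rewrite addr0 | move/eqP].
Qed.

Lemma cube_cells_cell_of a b c v :
  cube_cells (p1 (unbits a)) (p1 (unbits (a + v))) (p2 (unbits b)) (p2 (unbits (b + v)))
             (p3 (unbits c)) (p3 (unbits (c + v))) = cell_of @: cube (a, b, c) v.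
Proof.
apply/setP => e; rewrite -(coordsK e) (mem_imset _ _ cell_of_inj) mem_cube_coord inE.
case: (coords e) => [[y1 y2] y3].
by rewrite /cell_of /ci /cj /ck /= !(inj_eq perm_inj) !(inj_eq (@unbits_inj t)) andbA.
Qed.

Lemma addv_eq (a v : V) : (a + v == a) = (v == 0).
Proof. by rewrite -[X in _ == X]addr0 (inj_eq (addrI a)). Qed.

Lemma cube_is_3cube c v : v != 0 -> is_3cube L (cell_of @: cube c v).
Proof.
move=> v0; case: c => [[a b] c].
apply/existsP; exists (p1 (unbits a)); apply/existsP; exists (p1 (unbits (a + v))).
apply/existsP; exists (p2 (unbits b)); apply/existsP; exists (p2 (unbits (b + v))).
apply/existsP; exists (p3 (unbits c)); apply/existsP; exists (p3 (unbits (c + v))).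
rewrite !(inj_eq perm_inj) !(inj_eq (@unbits_inj t)) !(eq_sym _ (_ + v)) !addv_eq v0.
rewrite cube_cells_cell_of eqxx !L_unbits /=.
by repeat (apply/andP; split); apply/eqP; congr symbol_of; vec_eq.
Qed.

Lemma is_3cubeP Q : is_3cube L Q -> exists c v, v != 0 /\ Q = cell_of @: cube c v.
Proof.
case/existsP => i1 /existsP [i2 /existsP [j1 /existsP [j2 /existsP [k1 /existsP [k2]]]]].
have [a1 ->] := perm_unbits p1 i1; have [a2 ->] := perm_unbits p1 i2.
have [b1 ->] := perm_unbits p2 j1; have [b2 ->] := perm_unbits p2 j2.
have [c1 ->] := perm_unbits p3 k1; have [c2 ->] := perm_unbits p3 k2.
rewrite !(inj_eq perm_inj) !(inj_eq (@unbits_inj t)) !L_unbits.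
case/and4P => ha _ _ /and4P [/eqP -> /eqP/symbol_of_inj e1 /eqP/symbol_of_inj e2 _].
have eb : b2 = b1 + (a1 + a2).
  by apply/ffunP => i; move/ffunP/(_ i): e1; rewrite !ffunE; bool_cases.
have ec : c2 = c1 + (a1 + a2).
  apply/ffunP => i; have := congr1 (fun f : V => f i) e2; have := congr1 (fun f : V => f i) eb.
  by rewrite !ffunE; bool_cases.
exists (a1, b1, c1), (a1 + a2); split; first by rewrite (addg_eq0 (@vec_addxx t)).
by rewrite -cube_cells_cell_of (addKg (@vec_addxx t)) -eb -ec.
Qed.

Lemma swap_val_cube c v y : v != 0 -> y \in cube c v ->
  swap_val L (cell_of @: cube c v) (cell_of y) = symbol_of (lform dir1 y + v).
Proof.
move=> v0 yc; rewrite /swap_val (mem_imset _ _ cell_of_inj) yc Lat_cell_of.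
have other z : (z \in [set Lat L e | e in cell_of @: cube c v] :\ symbol_of (lform dir1 y)) =
               (z == symbol_of (lform dir1 y + v)).
  rewrite -(cube_shift yc); apply/idP/idP.
  - rewrite !inE => /andP [hz /imsetP [e /imsetP [y' /imsetP [r _ ->] ->] ez]].
    move: hz; rewrite ez Lat_cell_of lformD lform_dscale; case: (dot dir1 r) => //.
    by rewrite addr0 eqxx.
  - move/eqP => ->; rewrite !inE (inj_eq symbol_of_inj) addv_eq v0 /=.
    apply/imsetP; exists (cell_of (y + dscale (true, false, false) v)); last first.
      by rewrite Lat_cell_of lformD lform_dscale.
    by apply: imset_f; apply/imsetP; exists (true, false, false).
case: pickP => [z | none] /=; first by rewrite other => /eqP.
by have := none (symbol_of (lform dir1 y + v)); rewrite other eqxx.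
Qed.

Definition cube_allowed (c : X) (v : V) : bool :=
  [forall y in cube c v, symbol_of (lform dir1 y + v) \notin Aat A (cell_of y)].

Lemma allowed_cube c v : v != 0 -> allowed L A (cell_of @: cube c v) = cube_allowed c v.
Proof.
move=> v0; rewrite /allowed cube_is_3cube //=; apply/forall_inP/forall_inP => allowed_y y.
  by move=> yc; rewrite -(swap_val_cube v0 yc); apply: allowed_y; apply: imset_f.
by case/imsetP=> y' yc ->; rewrite swap_val_cube //; apply: allowed_y.
Qed.

Lemma card_allowed_3cubes c : (#|[set Q | allowed L A Q && (cell_of c \in Q)]|
  <= #|[set v : V | (v != 0%R) && cube_allowed c v]|)%N.
Proof.
apply: leq_trans (leq_imset_card (fun v => cell_of @: cube c v) _); apply: subset_leq_card.
apply/subsetP => Q; rewrite inE => /andP [QA cQ].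
have [c' [v [v0 eQ]]] := is_3cubeP (andP QA).1.
rewrite eQ (mem_imset _ _ cell_of_inj) in cQ; rewrite eQ -(cube_shift cQ) in QA *.
by apply: imset_f; rewrite inE v0 -allowed_cube.
Qed.

Definition conflict_points : {set X} := cell_of @^-1: conflicts L A.

Lemma card_conflict_points_line x tau (Y : {set cell (2 ^ t)}) : cell_of @: line x tau \subset Y ->
  (#|conflict_points :&: line x tau| <= #|Y :&: conflicts L A|)%N.
Proof.
move=> lY; rewrite -(card_imset _ cell_of_inj); apply: subset_leq_card.
apply/subsetP => e /imsetP [y /setIP [yc yl] ->].
by rewrite inE (subsetP lY) ?imset_f //; rewrite inE in yc.
Qed.

Ltac line_sub := apply/subsetP => e /imsetP [y /imsetP [w _ ->] ->];
  rewrite !inE ?Lat_cell_of ?lformD ?lform_dscale /= ?addr0 ?eqxx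
          /cell_of /ci /cj /ck ?pointDE /dscale /= ?addr0 ?eqxx ?andbT.

Lemma line_sub_row x :
  cell_of @: line x (false, true, false) \subset row_set (p1 (unbits x.1.1)) (p3 (unbits x.2)).
Proof. by line_sub. Qed.

Lemma line_sub_col x :
  cell_of @: line x (true, false, false) \subset col_set (p2 (unbits x.1.2)) (p3 (unbits x.2)).
Proof. by line_sub. Qed.

Lemma line_sub_file x :
  cell_of @: line x (false, false, true) \subset file_set (p1 (unbits x.1.1)) (p2 (unbits x.1.2)).
Proof. by line_sub. Qed.

Lemma line_sub_file_layer x : cell_of @: line x (true, true, false) \subset
  [set e in file_layer (p3 (unbits x.2)) | Lat L e == symbol_of (lform dir1 x)].
Proof. by line_sub. Qed.

Lemma line_sub_col_layer x : cell_of @: line x (true, false, true) \subset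
  [set e in col_layer (p2 (unbits x.1.2)) | Lat L e == symbol_of (lform dir1 x)].
Proof. by line_sub. Qed.

Lemma line_sub_row_layer x : cell_of @: line x (false, true, true) \subset
  [set e in row_layer (p1 (unbits x.1.1)) | Lat L e == symbol_of (lform dir1 x)].
Proof. by line_sub. Qed.

Lemma unique_3cube_diag y u : u != 0 ->
  [set Q | is_3cube L Q && (cell_of y \in Q) && (cell_of (y + dscale dir1 u) \in Q)] =
  [set cell_of @: cube y u].
Proof.
move=> u0; apply/setP => Q; rewrite !inE; apply/idP/eqP => [| ->]; last first.
  rewrite cube_is_3cube // !(mem_imset _ _ cell_of_inj) cube_self /=.
  by apply/imsetP; exists dir1.
case/andP => /andP [/is_3cubeP [c [v [v0 ->]]]]; rewrite !(mem_imset _ _ cell_of_inj) => yc.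
rewrite -(cube_shift yc) => /imsetP [r _ /addrI er]; congr (_ @: _).
case/orP: (dscale_eq v0 (isT : dir1 != 0) (esym er)) => /andP [_ /eqP uv]; rewrite uv //.
by rewrite uv eqxx in u0.
Qed.

Lemma diagonal_transversal x : is_transversal_set L (cell_of @: line x dir1).
Proof.
have diag_inj : injective (fun w => x + dscale dir1 w) by move=> w w' /addrI [].
split; first by rewrite (card_imset _ cell_of_inj) (card_imset _ diag_inj) card_vec.
split=> e e' /imsetP [y /imsetP [w _ ->] ->] /imsetP [y' /imsetP [w' _ ->] ->] ne;
  have {ne} ww : w != w' by apply: contra ne => /eqP ->.
  rewrite !Lat_cell_of !lformD !lform_dscale /= (inj_eq symbol_of_inj) (inj_eq (addrI _)) ww.
  rewrite /cell_of /ci /cj /ck /= !(inj_eq perm_inj) !(inj_eq (@unbits_inj t)).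
  by rewrite !(inj_eq (addrI _)) (negbTE ww).
have -> : x + dscale dir1 w' = (x + dscale dir1 w) + dscale dir1 (w + w').
  by rewrite -addrA -dscaleDr (addKg (@vec_addxx t)).
by rewrite unique_3cube_diag ?cards1 // (addg_eq0 (@vec_addxx t)).
Qed.

Lemma conflict_points_line (R : numDomainType) (kappa : R) :
  (forall i k, #|row_set i k :&: conflicts L A|%:R <= kappa * (2 ^ t)%:R) ->
  (forall j k, #|col_set j k :&: conflicts L A|%:R <= kappa * (2 ^ t)%:R) ->
  (forall i j, #|file_set i j :&: conflicts L A|%:R <= kappa * (2 ^ t)%:R) ->
  (forall l x : 'I_(2 ^ t),
     [/\ #|[set c in row_layer l | Lat L c == x] :&: conflicts L A|%:R <= kappa * (2 ^ t)%:R,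
         #|[set c in col_layer l | Lat L c == x] :&: conflicts L A|%:R <= kappa * (2 ^ t)%:R &
         #|[set c in file_layer l | Lat L c == x] :&: conflicts L A|%:R <= kappa * (2 ^ t)%:R]) ->
  (forall T, is_transversal_set L T -> #|T :&: conflicts L A|%:R <= kappa * (2 ^ t)%:R) ->
  forall x tau, tau != 0 -> #|conflict_points :&: line x tau|%:R <= kappa * (2 ^ t)%:R.
Proof.
move=> rows cols files symbols transversals x tau; set Lx := symbol_of (lform dir1 x).
suff via (Y : {set cell (2 ^ t)}) : cell_of @: line x tau \subset Y ->
    #|Y :&: conflicts L A|%:R <= kappa * (2 ^ t)%:R ->
    #|conflict_points :&: line x tau|%:R <= kappa * (2 ^ t)%:R.
  case: tau via => [[[] []] []] via // _.
- exact: via _ (subxx _) (transversals _ (diagonal_transversal x)).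
- by apply: via _ (line_sub_file_layer x) _; case: (symbols (p3 (unbits x.2)) Lx).
- by apply: via _ (line_sub_col_layer x) _; case: (symbols (p2 (unbits x.1.2)) Lx).
- exact: via _ (line_sub_col x) (cols _ _).
- by apply: via _ (line_sub_row_layer x) _; case: (symbols (p1 (unbits x.1.1)) Lx).
- exact: via _ (line_sub_row x) (rows _ _).
- exact: via _ (line_sub_file x) (files _ _).
by move=> lY; apply: le_trans; rewrite ler_nat card_conflict_points_line.
Qed.

End BooleanCoordinates.

Lemma card_involution_transfer n (L L' : latin_fun n) (G : cell n -> cell n) (P : pred (cell n)) x :
  involutive G -> (forall e, P (G e) = P e) -> (forall e, Lat L (G e) = Lat L' e) ->
  #|[set c | P c && (Lat L' c == x)]| = #|[set c | P c && (Lat L c == x)]|.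
Proof.
move=> GK PG LG; rewrite -[RHS](card_preimset _ (inv_inj GK)); apply: eq_card => e.
by rewrite !inE PG LG.
Qed.

Section SwapPacking.
Variables (t : nat) (L : latin_fun (2 ^ t)) (A : set_cube (2 ^ t)) (p1 p2 p3 s : {perm 'I_(2 ^ t)}).
Hypothesis L_boolean : forall i j k, L (p1 i) (p2 j) (p3 k) = s (boolean_cube i j k).
Local Notation V := {ffun 'I_t -> bool}.
Local Notation X := (V * V * V)%type.
Local Notation cell_of := (cell_of p1 p2 p3).
Local Notation coords := (coords p1 p2 p3).
Local Notation symbol_of := (symbol_of s).
Local Notation cell_of_inj := (@cell_of_inj t p1 p2 p3).
Local Notation cell_ofK := (@cell_ofK t p1 p2 p3).
Local Notation coordsK := (@coordsK t p1 p2 p3).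

Variables (C : {set X}) (d : X -> V).
Hypothesis C_allowed : forall c, c \in C -> (d c != 0) && cube_allowed A p1 p2 p3 s c (d c).
Hypothesis C_disjoint : forall c c', c \in C -> c' \in C -> c != c' ->
  [disjoint cube c (d c) & cube c' (d c')].
Hypothesis C_covers : conflict_points L A p1 p2 p3 \subset covered C d.

Definition packing_3cubes : {set {set cell (2 ^ t)}} := [set cell_of @: cube c (d c) | c in C].

Definition offset (y : X) : V :=
  if [pick c | (c \in C) && (y \in cube c (d c))] is Some c then d c else 0.

Lemma offset_in c y : c \in C -> y \in cube c (d c) -> offset y = d c.
Proof.
move=> cC yc; rewrite /offset; case: pickP => [c' /andP [c'C yc'] | none].
  have [-> // | ne] := eqVneq c' c.
  by have := C_disjoint c'C cC ne; rewrite -setI_eq0 => /eqP/setP/(_ y); rewrite !inE yc yc'.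
by have := none c; rewrite cC yc.
Qed.

Lemma offset_out y : y \notin covered C d -> offset y = 0.
Proof.
move=> yS; rewrite /offset; case: pickP => [c /andP [cC yc] | //].
by move: yS; rewrite (subsetP (cube_sub_covered d cC)).
Qed.

Lemma offset_shift y r : offset (y + dscale r (offset y)) = offset y.
Proof.
have [/bigcupP [c cC yc] | yS] := boolP (y \in covered C d); last first.
  by rewrite (offset_out yS) dscalev0 addr0 (offset_out yS).
rewrite (offset_in cC yc); apply: offset_in => //.
by rewrite -(cube_shift yc); apply: imset_f.
Qed.

Lemma swap_all_cell_of y :
  Lat (swap_all L packing_3cubes) (cell_of y) = symbol_of (lform dir1 y + offset y).
Proof.
rewrite /Lat /swap_all /=; case: pickP => [Q /andP [/imsetP [c cC ->] yQ] | none].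
  move: yQ; rewrite (mem_imset _ _ cell_of_inj) => yc.
  by rewrite (swap_val_cube L_boolean (andP (C_allowed cC)).1 yc) (offset_in cC yc).
rewrite offset_out ?addr0 ?(Lat_cell_of L_boolean) //; apply/bigcupP => -[c cC yc].
by have := none (cell_of @: cube c (d c)); rewrite imset_f // (mem_imset _ _ cell_of_inj) yc.
Qed.

Definition mirror (r : dir) (e : cell (2 ^ t)) : cell (2 ^ t) :=
  cell_of (coords e + dscale r (offset (coords e))).

Lemma mirrorK r : involutive (mirror r).
Proof. by move=> e; rewrite /mirror cell_ofK offset_shift -addrA point_addxx addr0 coordsK. Qed.

Lemma Lat_mirror r e : dot dir1 r ->
  Lat L (mirror r e) = Lat (swap_all L packing_3cubes) e.
Proof.
move=> r1; rewrite /mirror (Lat_cell_of L_boolean) lformD lform_dscale r1.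
by rewrite -[X in _ = Lat _ X](coordsK e) swap_all_cell_of.
Qed.

Lemma mirror_coords r e :
  [/\ r.1.1 = false -> ci (mirror r e) = ci e, r.1.2 = false -> cj (mirror r e) = cj e &
      r.2 = false -> ck (mirror r e) = ck e].
Proof.
split=> r0; rewrite -[in RHS](coordsK e) /mirror /cell_of /ci /cj /ck pointDE /dscale r0;
  by rewrite /= addr0.
Qed.

Lemma card_swap_all_mirror r (P : pred (cell (2 ^ t))) x : dot dir1 r ->
  (forall e, P (mirror r e) = P e) ->
  #|[set e | P e && (Lat (swap_all L packing_3cubes) e == x)]| = #|[set e | P e && (Lat L e == x)]|.
Proof.
by move=> r1 PG; apply: card_involution_transfer (mirrorK r) PG _ => e; apply: Lat_mirror.
Qed.

Lemma swap_all_latin : is_latin L -> is_latin (swap_all L packing_3cubes).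
Proof.
case=> rows [cols files]; split; [|split].
- move=> x i k; rewrite (card_swap_all_mirror (r := (false, true, false))) ?rows // => e.
  by have [hi _ hk] := mirror_coords (false, true, false) e; rewrite !inE hi ?hk.
- move=> x j k; rewrite (card_swap_all_mirror (r := (true, false, false))) ?cols // => e.
  by have [_ hj hk] := mirror_coords (true, false, false) e; rewrite !inE hj ?hk.
- move=> x i j; rewrite (card_swap_all_mirror (r := (false, false, true))) ?files // => e.
  by have [hi hj _] := mirror_coords (false, false, true) e; rewrite !inE hi ?hj.
Qed.

Lemma swap_all_avoids : avoids (swap_all L packing_3cubes) A.
Proof.
apply/setP => e; rewrite !inE -(coordsK e) swap_all_cell_of; move: (coords e) => y.
have [/bigcupP [c cC yc] | yS] := boolP (y \in covered C d).
  rewrite (offset_in cC yc); have /andP [_ /forall_inP allowed_c] := C_allowed cC.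
  exact/negbTE/allowed_c.
rewrite (offset_out yS) addr0 -(Lat_cell_of L_boolean); apply/negbTE; apply: contra yS => yA.
by apply: (subsetP C_covers); rewrite !inE.
Qed.

Lemma packing_3cubes_allowed Q : Q \in packing_3cubes -> allowed L A Q.
Proof.
by case/imsetP => c cC ->; have /andP [d0 ok] := C_allowed cC; rewrite (allowed_cube A L_boolean).
Qed.

Lemma packing_3cubes_disjoint Q Q' : Q \in packing_3cubes -> Q' \in packing_3cubes -> Q != Q' ->
  [disjoint Q & Q'].
Proof.
case/imsetP => c cC -> /imsetP [c' c'C ->] ne.
rewrite -setI_eq0 -imsetI; last by move=> ? ? _ _; apply: cell_of_inj.
rewrite imset_eq0 setI_eq0; apply: C_disjoint => //; by apply: contraNneq ne => ->.
Qed.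

Lemma packing_3cubes_cover e : e \in conflicts L A -> exists2 Q, Q \in packing_3cubes & e \in Q.
Proof.
move=> eA; have /bigcupP [c cC yc] : coords e \in covered C d.
  by apply: (subsetP C_covers); rewrite inE coordsK.
by exists (cell_of @: cube c (d c)); [apply: imset_f | rewrite -(coordsK e) imset_f].
Qed.

End SwapPacking.

Theorem mainTheorem3 (R : realType) (t m : nat)
  (L : latin_fun (2 ^ t)) (A : set_cube (2 ^ t))
  (alpha gamma kappa theta eps : R) :
  is_latin L -> iso_boolean L -> mmmm_cube m A ->
  0 < theta -> 0 < eps ->
  3 <= eps * (2 ^ t)%:R ->
  0 < alpha * (2 ^ t)%:R - 21 * kappa * (2 ^ t)%:R - 7 * eps * (2 ^ t)%:R
        - 84 * kappa / eps * (2 ^ t)%:R - 21 * theta / eps * (2 ^ t)%:R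
        - 80 * kappa / theta * (2 ^ t)%:R - 28 ->
  (forall i k : 'I_(2 ^ t),
     #|row_set i k :&: conflicts L A|%:R <= kappa * (2 ^ t)%:R) ->
  (forall j k : 'I_(2 ^ t),
     #|col_set j k :&: conflicts L A|%:R <= kappa * (2 ^ t)%:R) ->
  (forall i j : 'I_(2 ^ t),
     #|file_set i j :&: conflicts L A|%:R <= kappa * (2 ^ t)%:R) ->
  (forall l x : 'I_(2 ^ t),
     [/\ #|[set c in row_layer l | Lat L c == x] :&: conflicts L A|%:R <= kappa * (2 ^ t)%:R,
         #|[set c in col_layer l | Lat L c == x] :&: conflicts L A|%:R <= kappa * (2 ^ t)%:R &
         #|[set c in file_layer l | Lat L c == x] :&: conflicts L A|%:R <= kappa * (2 ^ t)%:R]) ->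
  (forall T : {set cell (2 ^ t)}, is_transversal_set L T ->
     #|T :&: conflicts L A|%:R <= kappa * (2 ^ t)%:R) ->
  (forall c : cell (2 ^ t),
     alpha * (2 ^ t)%:R <= #|[set Q : {set cell (2 ^ t)} | allowed L A Q && (c \in Q)]|%:R) ->
  exists F : {set {set cell (2 ^ t)}},
    [/\ (forall Q, Q \in F -> allowed L A Q),
        (forall Q Q', Q \in F -> Q' \in F -> Q != Q' -> [disjoint Q & Q']),
        (forall c, c \in conflicts L A -> exists2 Q, Q \in F & c \in Q),
        is_latin (swap_all L F) &
        avoids (swap_all L F) A].
Proof.
move=> L_latin [p1 [p2 [p3 [s L_boolean]]]] _ theta_gt0 eps_gt0 eps_n alpha_large
  rows cols files symbols transversals allowed_many.
have conf_line := conflict_points_line L_boolean rows cols files symbols transversals.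
have good_many c : c \in conflict_points L A p1 p2 p3 ->
    alpha * (2 ^ t)%:R <=
    #|[set v : {ffun 'I_t -> bool} | (v != 0) && cube_allowed A p1 p2 p3 s c v]|%:R.
  move=> _; apply: le_trans (allowed_many (cell_of p1 p2 p3 c)) _.
  by rewrite ler_nat; apply: card_allowed_3cubes.
have [C [d [[_ C_allowed C_disjoint _ _] C_covers]]] :=
  greedy_packing theta_gt0 eps_gt0 conf_line eps_n good_many alpha_large.
exists (packing_3cubes p1 p2 p3 C d); split.
- exact: packing_3cubes_allowed.
- exact: packing_3cubes_disjoint.
- exact: packing_3cubes_cover.
- exact: (swap_all_latin L_boolean C_allowed C_disjoint L_latin).
- exact: (swap_all_avoids L_boolean C_allowed C_disjoint C_covers).
Qed.
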